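(* Let $\mathcal B$ be \textsc{AlternatingOracle}. Then for every input $(\sigma,\omega)$ and every realization of its random choices, $$\mathrm{OBJ}_{\mathcal B}\le3\cdot\mathrm{OPT}+3\eta.$$
   Context: Caching with predictions. A cache of capacity $k$ starts empty; requests $\sigma(1),\dots,\sigma(T)$ are processed online; $\nu(t)=\min\{s>t:\sigma(s)=\sigma(t)\}$ ($T+1$ if none); with request $t$ the algorithm receives a prediction $\omega(t)$ of $\nu(t)$; $\eta=\sum_{t=1}^T|\nu(t)-\omega(t)|$. On a hit nothing happens; on a miss the page is loaded, and if the cache is full one cached page is first evicted. $\mathrm{OBJ}_{\mathcal Q}$ is the number of misses of $\mathcal Q$; $\mathrm{OPT}$ is the number of misses of Belady's optimal offline algorithm. Cached pages are identified by the index of their most recent request: $\mathcal I(t)$ is the set of indices $\max\{t'\le t:\sigma(t')=s\}$ over cached pages $s$ after request $t$. \textsc{AlternatingOracle}: on a miss with full cache at time $t$ one of three rules evicts a page: BlindOracle (evict cached $\sigma(i)$, $i\in\mathcal I(t-1)$, with maximal $\omega(i)$); RandomAlg (evict a uniformly random cached page); Corrector (with $W=\{i\in\mathcal I(t-1):\omega(i)<t\}$, evict $\sigma(i)$, $i\in W$, with minimal $\omega(i)$ if $W\ne\emptyset$, otherwise evict as BlindOracle). If $\sigma(t)$ was never requested before, BlindOracle is used; otherwise, if the most recent eviction of page $\sigma(t)$ used BlindOracle / RandomAlg / Corrector, then at time $t$ RandomAlg / Corrector / BlindOracle is used, respectively. *)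

From mathcomp Require Import all_boot.
Set Implicit Arguments. Unset Strict Implicit. Unset Printing Implicit Defensive.

Section Caching.
Variable P : eqType.
Variable sigma : nat -> P.        (* requests sigma 1, ..., sigma T (sigma 0 unused) *)

Definition nu (T t : nat) : nat :=
  head T.+1 [seq s <- iota t.+1 (T - t) | sigma s == sigma t].

Definition eta (omega : nat -> nat) (T : nat) : nat :=
  \sum_(1 <= t < T.+1) ((nu T t - omega t) + (omega t - nu T t)).

Definition last_req (n : nat) (s : P) : nat :=
  \max_(1 <= t' < n.+1 | sigma t' == s) t'.

Definition requested_before (t : nat) : bool :=
  has (fun t' => sigma t' == sigma t) (iota 1 t.-1).

(* number of misses of a run described by its cache contents after each step;
   cache t = set of pages in the cache after request t *)
Definition misses (T : nat) (cache : nat -> seq P) : nat :=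
  count (fun t => sigma t \notin cache t.-1) (iota 1 T).

Inductive rule := BlindOracle | RandomAlg | Corrector.

Definition next_rule (r : rule) : rule :=
  match r with
  | BlindOracle => RandomAlg
  | RandomAlg => Corrector
  | Corrector => BlindOracle
  end.

(* ev t = Some (p, r) : at time t page p was evicted using rule r;
   last_ev ev p n = rule of the most recent eviction of p among times n, ..., 1 *)
Fixpoint last_ev (ev : nat -> option (P * rule)) (p : P) (n : nat) : option rule :=
  match n with
  | 0 => None
  | n'.+1 =>
      match ev n with
      | Some (q, r) => if q == p then Some r else last_ev ev p n'
      | None => last_ev ev p n'
      end
  end.

Definition rule_at (ev : nat -> option (P * rule)) (t : nat) : rule :=
  if ~~ requested_before t then BlindOracle
  else match last_ev ev (sigma t) t.-1 with
       | Some r => next_rule r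
       | None => BlindOracle
       end.

Definition blind_ok (omega : nat -> nat) (t : nat) (C : seq P) (p : P) : Prop :=
  p \in C /\ forall q, q \in C -> omega (last_req t.-1 q) <= omega (last_req t.-1 p).

Definition random_ok (C : seq P) (p : P) : Prop := p \in C.

Definition corrector_ok (omega : nat -> nat) (t : nat) (C : seq P) (p : P) : Prop :=
  let W := [seq q <- C | omega (last_req t.-1 q) < t] in
  if W is [::] then blind_ok omega t C p
  else p \in W /\ forall q, q \in W -> omega (last_req t.-1 p) <= omega (last_req t.-1 q).

Definition rule_ok (r : rule) (omega : nat -> nat) (t : nat) (C : seq P) (p : P) : Prop :=
  match r with
  | BlindOracle => blind_ok omega t C p
  | RandomAlg => random_ok C p
  | Corrector => corrector_ok omega t C p
  end.

(* A run (any realization of random choices and any tie-breaking) of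
   AlternatingOracle with cache capacity k on requests 1..T. *)
Definition AO_run (omega : nat -> nat) (k T : nat)
    (cache : nat -> seq P) (ev : nat -> option (P * rule)) : Prop :=
  cache 0 = [::] /\
  forall t, 1 <= t <= T ->
    let C := cache t.-1 in
    if sigma t \in C then cache t = C /\ ev t = None
    else if size C < k then cache t = sigma t :: C /\ ev t = None
    else exists p, [/\ ev t = Some (p, rule_at ev t),
                       rule_ok (rule_at ev t) omega t C p
                     & cache t = sigma t :: rem p C].

(* A run (any tie-breaking) of Belady's algorithm: on a miss with full cache,
   evict the cached page whose next request is furthest in the future. *)
Definition belady_run (k T : nat) (cache : nat -> seq P) : Prop :=
  cache 0 = [::] /\
  forall t, 1 <= t <= T ->
    let C := cache t.-1 in
    if sigma t \in C then cache t = C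
    else if size C < k then cache t = sigma t :: C
    else exists p, [/\ p \in C,
                       forall q, q \in C -> nu T (last_req t.-1 q) <= nu T (last_req t.-1 p)
                     & cache t = sigma t :: rem p C].

End Caching.

From HB Require Import structures.
From mathcomp Require Import all_boot zify.
Set Implicit Arguments. Unset Strict Implicit. Unset Printing Implicit Defensive.

(* Misses on first requests are also misses of OPT.  Every other miss of a page q is
   attributed to the rule of the last eviction of q.  Since the rule used at a miss is the
   successor of the rule that last evicted the requested page, the misses attributed to
   RandomAlg (resp. Corrector) are at most the RandomAlg (resp. Corrector) evictions, hence
   at most the misses attributed to BlindOracle (resp. RandomAlg).  The misses attributed to
   BlindOracle are at most its evictions of pages requested again later.  Such an eviction
   either evicts the cached page requested farthest in the future, as Belady does, and these
   evictions are charged injectively to the non-compulsory misses of any algorithm with the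
   same capacity; or a cached page is requested later although its prediction is not larger,
   and this inversion is charged injectively to a unit of eta. *)

Section Count.
Variable X : eqType.
Implicit Types (a b c : pred X) (s : seq X).

Lemma sub_in_count a b s : {in s, subpred a b} -> count a s <= count b s.
Proof.
move=> ab; have -> : count a s = count (predI a b) s.
  by apply: eq_in_count => x xs /=; case ax: (a x); rewrite //= (ab x xs ax).
by apply: sub_count => x /andP[].
Qed.

Lemma count_predU_in a b c s :
  {in s, forall x, a x -> b x || c x} -> count a s <= count b s + count c s.
Proof.
by move=> abc; rewrite -count_predUI (leq_trans (sub_in_count abc)) ?leq_addr.
Qed.

Lemma count_leq_image (f : X -> X) a b s : uniq s ->
  {in s, forall x, a x -> exists2 y, (y \in s) && b y & f y = x} ->
  count a s <= count b s.
Proof.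
move=> s_uniq fab; rewrite -!size_filter -(size_map f [seq x <- s | b x]).
apply: uniq_leq_size; first exact: filter_uniq.
move=> x; rewrite mem_filter => /andP[ax xs]; have [y /andP[ys yb] <-] := fab x xs ax.
by rewrite map_f // mem_filter yb.
Qed.
End Count.

Lemma head_filter_iota (p : pred nat) d a n :
  let h := head d [seq u <- iota a n | p u] in
  (h = d /\ forall u, a <= u < a + n -> ~~ p u) \/
  [/\ a <= h < a + n, p h & forall u, a <= u < h -> ~~ p u].
Proof.
elim: n a => [|n IH] a /=; first by left; split=> // u; lia.
case: ifP => pa /=; first by right; split=> //; [lia | move=> u; lia].
have [[-> H] | [H1 H2 H3]] := IH a.+1.
  left; split=> // u Hu; case: (eqVneq u a) => [-> | ne]; first by rewrite pa.
  by apply: H; lia.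
right; split=> //; first lia.
move=> u Hu; case: (eqVneq u a) => [-> | ne]; first by rewrite pa.
by apply: H3; lia.
Qed.

Section NextRequest.
Variables (P : eqType) (sigma : nat -> P) (T : nat).

Definition next_req (t : nat) (q : P) : nat :=
  head T.+1 [seq u <- iota t.+1 (T - t) | sigma u == q].

Lemma next_reqP t q : t <= T ->
  [/\ t < next_req t q, next_req t q <= T.+1,
      (next_req t q <= T -> sigma (next_req t q) = q)
    & forall w, t < w < next_req t q -> sigma w != q].
Proof.
move=> tT; rewrite /next_req.
have [[-> H] | [H1 H2 H3]] :=
  head_filter_iota (fun u => sigma u == q) T.+1 t.+1 (T - t).
  split; [lia | lia | by rewrite ltnn | move=> w Hw; apply: H; lia].
split; [lia | lia | by move=> _; apply/eqP | move=> w Hw; apply: H3; lia].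
Qed.

Lemma next_req_gt t q : t <= T -> t < next_req t q.
Proof. by case/(next_reqP q). Qed.

Lemma next_req_pos t q : t <= T -> 0 < next_req t q.
Proof. by move/(next_req_gt q); apply: leq_trans. Qed.

Lemma next_req_le t q : t <= T -> next_req t q <= T.+1.
Proof. by case/(next_reqP q). Qed.

Lemma sigma_next_req t q : t <= T -> next_req t q <= T -> sigma (next_req t q) = q.
Proof. by case/(next_reqP q). Qed.

Lemma next_req_min t q w : t <= T -> t < w < next_req t q -> sigma w != q.
Proof. by case/(next_reqP q) => _ _ _; apply. Qed.

Lemma next_req_eq t q m : t <= T -> t < m <= T.+1 -> (m <= T -> sigma m = q) ->
  (forall w, t < w < m -> sigma w != q) -> next_req t q = m.
Proof.
move=> tT Hm Hq Hw; have [H1 H2 H3 H4] := next_reqP q tT.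
apply/eqP; rewrite eqn_leq; apply/andP; split; rewrite leqNgt; apply/negP=> lt.
  have : sigma m != q by apply: H4; lia.
  by rewrite Hq ?eqxx //; lia.
have : sigma (next_req t q) != q by apply: Hw; lia.
by rewrite H3 ?eqxx //; lia.
Qed.

Lemma next_req_skip t t' q : t <= t' <= T ->
  (forall w, t < w <= t' -> sigma w != q) -> next_req t' q = next_req t q.
Proof.
move=> Ht Hw; have [H1 H2 H3 H4] := @next_reqP t q ltac:(lia).
have t'_lt : t' < next_req t q.
  rewrite ltnNge; apply/negP => le.
  have : sigma (next_req t q) != q by apply: Hw; lia.
  by rewrite H3 ?eqxx //; lia.
apply: next_req_eq => //; [lia | lia | move=> w Hw'; apply: H4; lia].
Qed.

Lemma next_reqS t q : t < T -> sigma t.+1 != q -> next_req t.+1 q = next_req t q.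
Proof. by move=> tT ne; apply: next_req_skip => [|w Hw]; [lia | have -> : w = t.+1 by lia]. Qed.

Lemma sigma_succ_neq t q : t < T -> t.+1 < next_req t q -> sigma t.+1 != q.
Proof. by move=> tT lt; apply: (next_req_min (t:=t)); lia. Qed.

Lemma next_req_inj t t' q q' : t <= T -> t' <= T ->
  next_req t q = next_req t' q' -> next_req t q <= T -> q = q'.
Proof. by move=> tT t'T E le; rewrite -(sigma_next_req tT le) E sigma_next_req // -E. Qed.

End NextRequest.

Section CacheRun.
Variables (P : eqType) (sigma : nat -> P) (k T : nat) (c : nat -> seq P).

Definition cache_run :=
  c 0 = [::] /\ forall t, 1 <= t <= T ->
   (sigma t \in c t.-1 /\ c t = c t.-1) \/
   [/\ sigma t \notin c t.-1, size (c t.-1) < k & c t = sigma t :: c t.-1] \/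
   [/\ sigma t \notin c t.-1, k <= size (c t.-1) &
       exists2 p, p \in c t.-1 & c t = sigma t :: rem p (c t.-1)].

Hypothesis c_run : cache_run.

Lemma cache_uniq_size t : t <= T -> uniq (c t) /\ size (c t) <= k.
Proof.
case: c_run => c0 c_step; elim: t => [|t IH] tT; first by rewrite c0.
have [c_uniq c_size] := IH (ltnW tT).
have [[_ ->] | [[ni lt_k ->] | [ni _ [p pin ->]]]] //= := c_step t.+1 ltac:(lia).
  by rewrite ni c_uniq.
have c_pos : 0 < size (c t) by case: (c t) pin.
rewrite size_rem // rem_uniq // andbT; split; last lia.
by apply: contra ni => /mem_rem.
Qed.

Lemma cache_uniq t : t <= T -> uniq (c t).
Proof. by case/cache_uniq_size. Qed.

Lemma cache_size t : t <= T -> size (c t) <= k.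
Proof. by case/cache_uniq_size. Qed.

Lemma cache_sub t : 1 <= t <= T -> {subset c t <= sigma t :: c t.-1}.
Proof.
case: c_run => _ c_step tT q.
have [[_ ->] | [[_ _ ->] | [_ _ [p _ ->]]]] := c_step t tT; rewrite !inE.
- by move->; rewrite orbT.
- by [].
- by case/orP=> [-> // | /mem_rem ->]; rewrite orbT.
Qed.

Lemma cache_req t : 1 <= t <= T -> sigma t \in c t.
Proof.
by case: c_run => _ c_step tT; have [[? ->] | [[_ _ ->] | [_ _ [p _ ->]]]] := c_step t tT;
  rewrite ?mem_head.
Qed.

Lemma cache_enter a b q : a <= b <= T -> q \notin c a -> q \in c b ->
  exists2 w, a < w <= b & sigma w = q.
Proof.
elim: b => [|b IH] Hab qa qb.
  have a0 : a = 0 by lia.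
  by move: qa; rewrite a0 qb.
case: (eqVneq a b.+1) => [Eab | ne]; first by rewrite Eab qb in qa.
have := @cache_sub b.+1 ltac:(lia) q qb; rewrite inE => /orP[/eqP -> | qb'].
  by exists b.+1 => //; lia.
by have [w Hw Ew] := IH ltac:(lia) qa qb'; exists w => //; lia.
Qed.

Lemma cache_stay a b q : a <= b <= T -> q \in c b ->
  (forall w, a < w <= b -> sigma w != q) -> q \in c a.
Proof.
move=> Hab qb Hw; apply/negPn/negP => qa.
have [w /Hw] := cache_enter Hab qa qb.
by move=> /eqP.
Qed.

Lemma cache_requested t q : t <= T -> q \in c t -> exists2 w, 0 < w <= t & sigma w = q.
Proof.
move=> tT qt; have q0 : q \notin c 0 by case: c_run => ->.
exact: (@cache_enter 0 t q).
Qed.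

End CacheRun.

Section LastRequest.
Variables (P : eqType) (sigma : nat -> P) (T : nat).

Lemma last_req_le n q : last_req sigma n q <= n.
Proof.
by apply/bigmax_leqP_seq => i; rewrite mem_index_iota => /andP[_ ?] _; lia.
Qed.

Lemma last_reqS n q :
  last_req sigma n.+1 q = if sigma n.+1 == q then n.+1 else last_req sigma n q.
Proof.
rewrite /last_req big_mkcond big_nat_recr //= -big_mkcond /=.
have := last_req_le n q; rewrite /last_req => le_n.
by case: ifP => _; [apply/maxn_idPr; lia | rewrite maxn0].
Qed.

Lemma last_reqP n q : (exists2 w, 0 < w <= n & sigma w = q) ->
  [/\ 0 < last_req sigma n q <= n, sigma (last_req sigma n q) = q &
      forall w, last_req sigma n q < w <= n -> sigma w != q].
Proof.
elim: n => [|n IH] [w Hw Ew]; first lia.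
rewrite last_reqS; case: ifP => [/eqP -> | ne]; first by split=> // [|w']; lia.
have [|H1 H2 H3] := IH.
  exists w => //; case: (eqVneq w n.+1) => [Ew1 | ]; last lia.
  by move: ne; rewrite -Ew1 Ew eqxx.
split=> // [|w' Hw']; first lia.
by case: (eqVneq w' n.+1) => [-> | ?]; [rewrite ne | apply: H3; lia].
Qed.

Lemma nu_last_req n q : n <= T -> (exists2 w, 0 < w <= n & sigma w = q) ->
  nu sigma T (last_req sigma n q) = next_req sigma T n q.
Proof.
move=> nT q_req; have [H1 H2 H3] := last_reqP q_req.
by rewrite /nu H2 -/(next_req sigma T _ q) (next_req_skip (t:=last_req sigma n q)) //; lia.
Qed.

End LastRequest.

Lemma requested_beforeP (P : eqType) (sigma : nat -> P) t :
  reflect (exists2 w, 0 < w < t & sigma w = sigma t) (requested_before sigma t).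
Proof.
apply: (iffP hasP) => [[w] | [w Hw Ew]].
  by rewrite mem_iota => Hw /eqP Ew; exists w => //; lia.
by exists w; [rewrite mem_iota; lia | rewrite Ew].
Qed.

Lemma mem_iota1 n t : (t \in iota 1 n) = (0 < t <= n).
Proof. by rewrite mem_iota add1n ltnS. Qed.

Lemma count_iota1S (a : pred nat) n : count a (iota 1 n.+1) = count a (iota 1 n) + a n.+1.
Proof. by rewrite -(addn1 n) iotaD count_cat /= addn0 add1n addn1. Qed.

Definition rule_eqb (r r' : rule) : bool :=
  match r, r' with
  | BlindOracle, BlindOracle | RandomAlg, RandomAlg | Corrector, Corrector => true
  | _, _ => false
  end.

Lemma rule_eqP : Equality.axiom rule_eqb.
Proof. by case; case; constructor. Qed.

HB.instance Definition _ := hasDecEq.Build rule rule_eqP.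

Section LastEviction.
Variables (P : eqType) (ev : nat -> option (P * rule)).

Lemma last_evP q n r : last_ev ev q n = Some r -> exists2 e, 0 < e <= n &
  ev e = Some (q, r) /\ forall e' p' r', e < e' <= n -> ev e' = Some (p', r') -> p' != q.
Proof.
elim: n => [//|n IH] /=.
case E: (ev n.+1) => [[q' r'] |]; first case: ifP => [/eqP Eq [Er] | ne].
- by exists n.+1; [lia | split=> [|e']; [rewrite E Eq Er | lia]].
- move=> /IH [e He [Ee later]]; exists e; first lia; split=> // e' p' r'' He'.
  case: (eqVneq e' n.+1) => [-> | ne']; last by apply: later; lia.
  by rewrite E => -[<- _]; rewrite ne.
- move=> /IH [e He [Ee later]]; exists e; first lia; split=> // e' p' r'' He'.
  by case: (eqVneq e' n.+1) => [-> | ne']; [rewrite E | apply: later; lia].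
Qed.

Lemma last_ev_evicted q n e r : 0 < e <= n -> ev e = Some (q, r) -> last_ev ev q n != None.
Proof.
elim: n => [|n IH] He Ee /=; first lia.
case: (eqVneq e n.+1) => [Ee1 | ne1]; first by rewrite -Ee1 Ee eqxx.
have {}IH := IH ltac:(lia) Ee.
by case: (ev n.+1) => [[q' r'] |] //; case: ifP.
Qed.

End LastEviction.

Section Misses.
Variables (P : eqType) (sigma : nat -> P).

Definition miss (c : nat -> seq P) (t : nat) : bool := sigma t \notin c t.-1.

Definition noncompulsory (c : nat -> seq P) (t : nat) : bool :=
  miss c t && requested_before sigma t.

Lemma misses_split k T c : cache_run sigma k T c ->
  count (predC (requested_before sigma)) (iota 1 T) + count (noncompulsory c) (iota 1 T)
  = misses sigma T c.
Proof.
move=> c_run; rewrite -count_predUI.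
rewrite (@eq_in_count _ (predI _ _) pred0) ?count_pred0 ?addn0; last first.
  by move=> t _ /=; rewrite /noncompulsory; case: (requested_before sigma t); rewrite ?andbF.
apply: eq_in_count => t; rewrite mem_iota1 => tT /=; rewrite /noncompulsory /miss.
case: (boolP (requested_before sigma t)) => [_ | /requested_beforeP nreq]; first by rewrite andbT.
symmetry; apply/negP => /(cache_requested c_run (t:=t.-1) ltac:(lia)) [w Hw Ew].
by apply: nreq; exists w => //; lia.
Qed.

End Misses.

Lemma rule_ok_mem (P : eqType) (sigma : nat -> P) r omega t (C : seq P) p :
  rule_ok sigma r omega t C p -> p \in C.
Proof.
case: r => [[] // | // |]; rewrite /= /corrector_ok.
case E: [seq q <- C | _] => [|a l] [pW _] //.
by move: pW; rewrite -E mem_filter => /andP[].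
Qed.

Section PredictionError.
Variables (P : eqType) (sigma : nat -> P) (omega : nat -> nat) (T : nat).

Local Notation nu := (nu sigma T).

Definition error_interval (i : nat) : seq nat :=
  if nu i < omega i then iota (nu i).+1 (omega i - nu i) else iota (omega i) (nu i - omega i).

Definition error_units : seq (nat * nat) :=
  flatten [seq [seq (i, u) | u <- error_interval i] | i <- iota 1 T].

Lemma size_error_units : size error_units = eta sigma omega T.
Proof.
rewrite /error_units size_flatten /shape -map_comp sumnE big_map /eta.
rewrite /index_iota subSS subn0; apply: eq_bigr => i _ /=.
by rewrite size_map /error_interval; case: ltnP => H; rewrite size_iota; lia.
Qed.

Lemma mem_error_units i u : 0 < i <= T -> u \in error_interval i -> (i, u) \in error_units.
Proof.
move=> iT ui; apply/flattenP; exists [seq (i, u) | u <- error_interval i]; last exact: map_f.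
by apply: (map_f (fun i => [seq (i, u) | u <- error_interval i])); rewrite mem_iota1.
Qed.

End PredictionError.

Section AlternatingOracle.
Variables (P : eqType) (sigma : nat -> P) (omega : nat -> nat) (k T : nat)
  (cA : nat -> seq P) (ev : nat -> option (P * rule)).
Hypothesis A_run : AO_run sigma omega k T cA ev.

Local Notation next := (next_req sigma T).

Lemma AO_cache_run : cache_run sigma k T cA.
Proof.
case: A_run => c0 step; split=> // t tT; have := step t tT => /=.
case: ifP => [I [-> _] | ni]; first by left.
case: ifP => [sz [-> _] | /negbT]; first by right; left.
rewrite -leqNgt => sz [p [_ /rule_ok_mem pin ->]]; right; right; split=> //.
by exists p.
Qed.

Lemma AO_evict t p r : 1 <= t <= T -> ev t = Some (p, r) ->
  [/\ r = rule_at sigma ev t, miss sigma cA t, size (cA t.-1) = k,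
      rule_ok sigma r omega t (cA t.-1) p & cA t = sigma t :: rem p (cA t.-1)].
Proof.
move=> tT Eev; case: A_run => _ step; have := step t tT => /=.
case: ifP => [_ [_] | /negbT ni]; first by rewrite Eev.
case: ifP => [_ [_] | /negbT]; first by rewrite Eev.
rewrite -leqNgt => sz [p' [Eev' ok ->]]; move: Eev; rewrite Eev' => -[<- <-].
split=> //; apply/eqP; rewrite eqn_leq sz (cache_size AO_cache_run) //; lia.
Qed.

Lemma AO_evicted_mem t p r : 1 <= t <= T -> ev t = Some (p, r) ->
  p \in cA t.-1 /\ p \notin cA t.
Proof.
move=> tT /(AO_evict tT) [_ ni _ /rule_ok_mem pin ->]; split=> //.
rewrite inE negb_or (mem_rem_uniq _ (cache_uniq AO_cache_run _)); last lia.
by rewrite inE eqxx andbT; apply: contra ni => /eqP <-.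
Qed.

Lemma AO_leave_evicted t q : 1 <= t <= T -> q \in cA t.-1 -> q \notin cA t ->
  exists r, ev t = Some (q, r).
Proof.
move=> tT qin qout; case: A_run => _ step; have := step t tT => /=.
case: ifP => [_ [E _] | _]; first by rewrite E qin in qout.
case: ifP => [_ [E _] | _]; first by rewrite E inE qin orbT in qout.
case=> p [Eev _ E]; exists (rule_at sigma ev t); rewrite Eev.
case: (eqVneq q p) => [-> // | ne]; move: qout.
by rewrite E inE (mem_rem_uniq _ (cache_uniq AO_cache_run _)) ?inE ?ne ?qin ?orbT //; lia.
Qed.

Lemma AO_evicted_between a b q : a <= b <= T -> q \in cA a -> q \notin cA b ->
  exists2 w, a < w <= b & exists r, ev w = Some (q, r).
Proof.
elim: b => [|b IH] Hab qa qb.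
  have a0 : a = 0 by lia.
  by move: qb; rewrite -a0 qa.
case: (eqVneq a b.+1) => [Eab | ne]; first by move: qb; rewrite -Eab qa.
case: (boolP (q \in cA b)) => [qb' | /(IH ltac:(lia) qa) [w Hw Ew]].
  by exists b.+1; [lia | apply: (@AO_leave_evicted b.+1 q _ qb' qb); lia].
by exists w => //; lia.
Qed.

Definition evicted_by (r : rule) (t : nat) : bool :=
  if ev t is Some (_, r') then r' == r else false.

Definition evicted_returning (r : rule) (t : nat) : bool :=
  if ev t is Some (p, r') then (r' == r) && (next t.-1 p <= T) else false.

Definition miss_after (r : rule) (t : nat) : bool :=
  noncompulsory sigma cA t && (last_ev ev (sigma t) t.-1 == Some r).

Lemma noncompulsory_last_ev t : 0 < t <= T -> noncompulsory sigma cA t ->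
  last_ev ev (sigma t) t.-1 != None.
Proof.
move=> tT /andP[ni /requested_beforeP [w Hw Ew]].
have qw : sigma t \in cA w by rewrite -Ew (cache_req AO_cache_run); lia.
have [e He [r Ee]] := AO_evicted_between (a:=w) (b:=t.-1) ltac:(lia) qw ni.
by apply: (last_ev_evicted (e:=e) (r:=r)) => //; lia.
Qed.

Lemma count_noncompulsory_by_last_rule : count (noncompulsory sigma cA) (iota 1 T) <=
  count (miss_after BlindOracle) (iota 1 T) +
  count (miss_after RandomAlg) (iota 1 T) + count (miss_after Corrector) (iota 1 T).
Proof.
rewrite -addnA; apply: leq_trans (count_predU_in (b := miss_after BlindOracle)
  (c := predU (miss_after RandomAlg) (miss_after Corrector)) _) _.
  move=> t; rewrite mem_iota1 => tT nc; have := noncompulsory_last_ev tT nc.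
  by rewrite /= /miss_after nc; case: (last_ev _ _ _) => [[] | ].
by rewrite leq_add2l -count_predUI leq_addr.
Qed.

Lemma next_req_last_eviction t e r : 0 < t <= T -> miss sigma cA t ->
  0 < e <= t.-1 -> ev e = Some (sigma t, r) ->
  (forall e' p' r', e < e' <= t.-1 -> ev e' = Some (p', r') -> p' != sigma t) ->
  next e.-1 (sigma t) = t.
Proof.
move=> tT ni He Ee not_again; have [_ nie] := AO_evicted_mem (t:=e) ltac:(lia) Ee.
apply: next_req_eq => //; [lia | lia | move=> w Hw].
apply/negP => /eqP Ew; case: (eqVneq w e) => [Ewe | new].
  by move: nie; rewrite -Ew Ewe (cache_req AO_cache_run) //; lia.
have qw : sigma t \in cA w by rewrite -Ew (cache_req AO_cache_run); lia.
have [e' He' [r' Ee']] := AO_evicted_between (a:=w) (b:=t.-1) ltac:(lia) qw ni.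
by move: (not_again e' _ _ ltac:(lia) Ee'); rewrite eqxx.
Qed.

Definition return_time (e : nat) : nat := if ev e is Some (p, _) then next e.-1 p else 0.

Lemma count_miss_after_le r :
  count (miss_after r) (iota 1 T) <= count (evicted_returning r) (iota 1 T).
Proof.
apply: (count_leq_image (f := return_time)); first exact: iota_uniq.
move=> t; rewrite mem_iota1 => tT /andP[/andP[ni _] /eqP /last_evP [e He [Ee not_again]]].
have Hret := next_req_last_eviction tT ni He Ee not_again.
exists e; last by rewrite /return_time Ee.
by rewrite mem_iota1 /evicted_returning Ee eqxx Hret; apply/andP; split; lia.
Qed.

Lemma count_evicted_returning_le r :
  count (evicted_returning r) (iota 1 T) <= count (evicted_by r) (iota 1 T).
Proof.
apply: sub_in_count => t _; rewrite /evicted_returning /evicted_by.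
by case: (ev t) => [[p ?] /andP[] |].
Qed.

Lemma count_evicted_by_next r : r != Corrector ->
  count (evicted_by (next_rule r)) (iota 1 T) <= count (miss_after r) (iota 1 T).
Proof.
move=> rC; apply: sub_in_count => t; rewrite mem_iota1 => tT.
rewrite /evicted_by; case Eev: (ev t) => [[p r'] | //] /eqP Er; rewrite {r'}Er in Eev.
have {Eev} [Er ni _ _ _] := AO_evict tT Eev; rewrite /miss_after /noncompulsory ni /=.
move: Er; rewrite /rule_at; case: (requested_before sigma t); last by case: r rC.
by case: (last_ev ev (sigma t) t.-1) => [r1 |]; case: r rC => //; case: r1.
Qed.

Lemma count_miss_after_le_blind r :
  count (miss_after r) (iota 1 T) <= count (evicted_returning BlindOracle) (iota 1 T).
Proof.
have chain r' : r' != Corrector ->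
    count (miss_after (next_rule r')) (iota 1 T) <= count (miss_after r') (iota 1 T).
  move=> r'C; apply: leq_trans (count_miss_after_le _) _.
  exact: leq_trans (count_evicted_returning_le _) (count_evicted_by_next r'C).
have blind := count_miss_after_le BlindOracle.
case: r => //; first exact: leq_trans (chain BlindOracle isT) blind.
exact: leq_trans (chain RandomAlg isT) (leq_trans (chain BlindOracle isT) blind).
Qed.

Lemma count_noncompulsory_AO : count (noncompulsory sigma cA) (iota 1 T) <=
  3 * count (evicted_returning BlindOracle) (iota 1 T).
Proof.
apply: leq_trans count_noncompulsory_by_last_rule _.
by rewrite (mulSn 2) mul2n -addnn addnA !leq_add ?count_miss_after_le_blind.
Qed.

Definition farthest_eviction (e : nat) : bool :=
  if ev e is Some (p, _) then
    (next e.-1 p <= T) && all (fun q => next e.-1 q <= next e.-1 p) (cA e.-1)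
  else false.

Definition misguided_eviction (e : nat) : bool :=
  if ev e is Some (p, r) then
    [&& r == BlindOracle, next e.-1 p <= T &
        ~~ all (fun q => next e.-1 q <= next e.-1 p) (cA e.-1)]
  else false.

Lemma count_evicted_returning_blind : count (evicted_returning BlindOracle) (iota 1 T) <=
  count farthest_eviction (iota 1 T) + count misguided_eviction (iota 1 T).
Proof.
apply: count_predU_in => e _; rewrite /evicted_returning /farthest_eviction /misguided_eviction.
by case: (ev e) => [[p r] /andP[-> ->] |] //=; case: (all _ _); rewrite ?orbT.
Qed.

Lemma return_time_inj e1 e2 : 0 < e1 <= T -> 0 < e2 <= T -> ev e1 != None -> ev e2 != None ->
  return_time e1 = return_time e2 -> return_time e1 <= T -> e1 = e2.
Proof.
wlog le12 : e1 e2 / e1 <= e2.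
  move=> W h1 h2 s1 s2 E K; case: (leqP e1 e2) => H; first exact: W.
  by symmetry; apply: W => //; [exact: ltnW | rewrite -E].
rewrite /return_time => h1 h2; case E1: (ev e1) => [[p1 r1] |] // _.
case E2: (ev e2) => [[p2 r2] |] // _ E K.
case: (ltngtP e1 e2) le12 => // lt _.
have [_ p1_out] := AO_evicted_mem h1 E1; have [p2_in _] := AO_evicted_mem h2 E2.
have Ep : p1 = p2 by apply: (next_req_inj _ _ E K); lia.
rewrite -Ep in p2_in E.
have [w Hw Ew] := cache_enter AO_cache_run (a:=e1) (b:=e2.-1) ltac:(lia) p1_out p2_in.
have := @next_req_gt _ sigma T e2.-1 p1 ltac:(lia); rewrite -E => gt.
have : sigma w != p1 by apply: (@next_req_min _ sigma T e1.-1); lia.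
by rewrite Ew eqxx.
Qed.

Local Notation lr := (last_req sigma).
Local Notation nu := (nu sigma T).

Definition later_page (e : nat) (p : P) : P :=
  head p [seq q <- cA e.-1 | next e.-1 p < next e.-1 q].

Lemma misguided_evictionP e : 0 < e <= T -> misguided_eviction e ->
  exists2 p, ev e = Some (p, BlindOracle) &
  let y := later_page e p in
  [/\ next e.-1 p <= T, next e.-1 p < next e.-1 y, omega (lr e.-1 y) <= omega (lr e.-1 p),
      nu (lr e.-1 p) = next e.-1 p /\ nu (lr e.-1 y) = next e.-1 y
    & 0 < lr e.-1 p <= T /\ 0 < lr e.-1 y <= T].
Proof.
rewrite /misguided_eviction => eT; case Eev: (ev e) => [[p r] | //].
case/and3P=> /eqP Er pT not_farthest; rewrite Er in Eev *; exists p => //=.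
have [_ _ _ ok _] := AO_evict eT Eev; have [p_in blind_max] := ok.
have y_in : later_page e p \in [seq q <- cA e.-1 | next e.-1 p < next e.-1 q].
  rewrite /later_page; case E: [seq q <- _ | _] => [|a l]; last exact: mem_head.
  move: not_farthest; rewrite -has_predC => /hasP [q qin qn].
  have : q \in [seq q <- cA e.-1 | next e.-1 p < next e.-1 q].
    by rewrite mem_filter qin andbT ltnNge; exact: qn.
  by rewrite E.
move: y_in; rewrite mem_filter => /andP[y_later y_in].
have requested q : q \in cA e.-1 -> exists2 w, 0 < w <= e.-1 & sigma w = q.
  by apply: (cache_requested AO_cache_run); lia.
have lr_range q : q \in cA e.-1 -> 0 < lr e.-1 q <= T.
  by move/requested/last_reqP => [? _ _]; lia.
split=> //; first exact: blind_max.
  by split; apply: nu_last_req => //; [lia | exact: requested | lia | exact: requested].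
by split; apply: lr_range.
Qed.

(* At a misguided eviction of [p], the cached page [y] requested later has no larger
   prediction, so the unit at [nu (lr p)] or at [omega (lr y)] lies in the error interval of
   [lr y] or of [lr p] respectively; either unit determines the return time of [p]. *)
Definition charged_error (e : nat) : nat * nat :=
  if ev e is Some (p, _) then
    let y := later_page e p in
    if omega (lr e.-1 y) <= nu (lr e.-1 p) then (lr e.-1 y, nu (lr e.-1 p))
    else (lr e.-1 p, omega (lr e.-1 y))
  else (0, 0).

Lemma charged_error_unit e : 0 < e <= T -> misguided_eviction e ->
  charged_error e \in error_units sigma omega T.
Proof.
move=> eT /(misguided_evictionP eT) [p Eev] /= [pT lt le_omega [nu_p nu_y] [lr_p lr_y]].
rewrite /charged_error Eev /=; case: leqP => H; apply: mem_error_units => //;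
  rewrite /error_interval ?nu_p ?nu_y; rewrite ?nu_p in H.
  by rewrite ltnNge (_ : omega _ <= _) /= ?mem_iota; lia.
by rewrite (_ : _ < omega _) ?mem_iota; lia.
Qed.

Lemma charged_error_return_time e1 e2 : 0 < e1 <= T -> 0 < e2 <= T ->
  misguided_eviction e1 -> misguided_eviction e2 ->
  charged_error e1 = charged_error e2 -> return_time e1 = return_time e2.
Proof.
move=> e1T e2T /(misguided_evictionP e1T) [p1 E1] /= [_ lt1 _ [nu_p1 nu_y1] _].
move=> /(misguided_evictionP e2T) [p2 E2] /= [_ lt2 _ [nu_p2 nu_y2] _].
rewrite /return_time /charged_error E1 E2 /= -nu_p1 -nu_p2.
rewrite -nu_p1 -nu_y1 in lt1; rewrite -nu_p2 -nu_y2 in lt2; move: lt1 lt2.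
move=> lt1 lt2; case: leqP => H1; case: leqP => H2 [Ei Eu];
  by move: H1 H2 lt1 lt2; rewrite ?Ei ?Eu; lia.
Qed.

Lemma count_misguided_eviction : count misguided_eviction (iota 1 T) <= eta sigma omega T.
Proof.
rewrite -size_error_units -size_filter -(size_map charged_error).
apply: uniq_leq_size; last first.
  move=> x /mapP [e]; rewrite mem_filter mem_iota1 => /andP[me eT] ->.
  exact: charged_error_unit.
rewrite map_inj_in_uniq ?filter_uniq ?iota_uniq // => e1 e2.
rewrite !mem_filter !mem_iota1 => /andP[m1 e1T] /andP[m2 e2T] E.
have Eret := charged_error_return_time e1T e2T m1 m2 E.
have [p1 E1 [p1T _ _ _ _]] := misguided_evictionP e1T m1.
have [p2 E2 _] := misguided_evictionP e2T m2.
by apply: return_time_inj => //; rewrite ?E1 ?E2 // /return_time E1.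
Qed.

Section Charging.
Variable cO : nat -> seq P.
Hypothesis O_run : cache_run sigma k T cO.

Definition kept_until_next (t : nat) (q : P) : bool := q \in cO (next t q).-1.

(* Invariant at time [t]: [cl] lists the misses of [cO] charged so far, one per farthest
   eviction.  A charged miss [u] still to come is the next request of [sigma u], and if
   AlternatingOracle caches that page it lies in [Us].  Each [y] in [Us] is paired with a
   distinct page [b y] that [cO] holds and AlternatingOracle does not, until after the next
   request of [y]; at a farthest eviction these pages leave room for only [k] pages, so some
   cached page is neither kept by [cO] nor in [Us] and provides a fresh miss to charge. *)
Definition pairing (t : nat) (Us : seq P) (b : P -> P) : Prop :=
  [/\ uniq Us, {subset Us <= cA t}, {in Us &, injective b} &
      {in Us, forall y, [/\ b y \notin cA t, next t y < next t (b y) &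
                          forall t', t <= t' < next t (b y) -> b y \in cO t']}].

Definition claimed (t : nat) (Us : seq P) (cl : seq nat) : Prop :=
  [/\ uniq cl, {in cl, forall u, 0 < u <= T /\ noncompulsory sigma cO u} &
      {in cl, forall u, t < u -> next t (sigma u) = u /\ (sigma u \in cA t -> sigma u \in Us)}].

Definition prune (t : nat) (Us : seq P) : seq P :=
  [seq y <- Us | (y != sigma t.+1) && (y \in cA t.+1)].

Lemma pairing_prune t Us b : t < T -> pairing t Us b -> pairing t.+1 (prune t Us) b.
Proof.
move=> tT [Us_uniq Us_sub b_inj b_spec].
have sub := @cache_sub _ _ _ _ _ AO_cache_run t.+1 ltac:(lia).
split=> [||y1 y2|y].
- exact: filter_uniq.
- by move=> y; rewrite mem_filter => /andP[/andP[]].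
- by rewrite !mem_filter => /andP[_ ?] /andP[_ ?]; apply: b_inj.
rewrite mem_filter => /andP[/andP[ne y_in] yU]; have [b_out lt b_kept] := b_spec y yU.
have nb : sigma t.+1 != b y.
  by apply: (sigma_succ_neq tT); have := next_req_gt sigma y (ltnW tT); lia.
rewrite !next_reqS // 1?eq_sym //; split=> // [|t' Ht'].
  by apply/negP => /sub; rewrite inE (negbTE b_out) orbF eq_sym (negbTE nb).
by apply: b_kept; lia.
Qed.

Lemma claimed_prune t Us cl : t < T -> claimed t Us cl -> claimed t.+1 (prune t Us) cl.
Proof.
move=> tT [cl_uniq cl_miss cl_next]; split=> // u uin Hu.
have [next_u Us_u] := cl_next u uin ltac:(lia).
have ne : sigma t.+1 != sigma u by apply: (sigma_succ_neq tT); lia.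
rewrite next_reqS // next_u; split=> // u_in.
have u_in' : sigma u \in cA t.
  by move: (cache_sub AO_cache_run (t:=t.+1) ltac:(lia) u_in); rewrite inE eq_sym (negbTE ne).
by rewrite mem_filter eq_sym ne u_in Us_u.
Qed.

Lemma claimed_cons t Us cl u : claimed t Us cl -> u \notin cl -> 0 < u <= T ->
  noncompulsory sigma cO u -> next t (sigma u) = u -> sigma u \notin cA t ->
  claimed t Us (u :: cl).
Proof.
move=> [cl_uniq cl_miss cl_next] ucl uT nc next_u u_out; split=> [|v|v].
- by rewrite /= ucl.
- by rewrite inE => /orP[/eqP -> | /cl_miss].
by rewrite inE => /orP[/eqP -> _ | /cl_next]; first by rewrite (negbTE u_out).
Qed.

Lemma claimed_consU t Us cl z u : claimed t Us cl -> u \notin cl -> 0 < u <= T ->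
  noncompulsory sigma cO u -> next t (sigma u) = u -> sigma u = z ->
  claimed t (z :: Us) (u :: cl).
Proof.
move=> [cl_uniq cl_miss cl_next] ucl uT nc next_u Ez; split=> [|v|v].
- by rewrite /= ucl.
- by rewrite inE => /orP[/eqP -> | /cl_miss].
rewrite inE => /orP[/eqP -> _ | /cl_next next_v /next_v [-> Us_v]].
  by rewrite next_u Ez mem_head.
by split=> // /Us_v; rewrite inE orbC => ->.
Qed.

Lemma requested_at_next_req t q : t <= T -> q \in cA t -> next t q <= T ->
  requested_before sigma (next t q).
Proof.
move=> tT q_in qT; have [w Hw Ew] := cache_requested AO_cache_run tT q_in.
apply/requested_beforeP; exists w; first by have := next_req_gt sigma q tT; lia.
by rewrite Ew sigma_next_req.
Qed.

Lemma fresh_claim t Us cl q : t <= T -> claimed t Us cl -> q \in cA t -> q \notin Us ->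
  next t q <= T -> ~~ kept_until_next t q ->
  [/\ next t q \notin cl, noncompulsory sigma cO (next t q) & sigma (next t q) = q].
Proof.
move=> tT [_ _ cl_next] q_in qU qT nk; have gt := next_req_gt sigma q tT.
have Eq : sigma (next t q) = q by apply: sigma_next_req.
split=> //; last by rewrite /noncompulsory /miss Eq nk requested_at_next_req.
by apply/negP => /cl_next /(_ gt) [_ /(_ _)]; rewrite Eq q_in => /(_ isT); rewrite (negbTE qU).
Qed.


Lemma kept_until_next_stay t q : t <= T -> kept_until_next t q ->
  forall t', t <= t' < next t q -> q \in cO t'.
Proof.
move=> tT kept t' Ht'; have le := next_req_le sigma q tT.
apply: (cache_stay O_run (b := (next t q).-1)) kept _; first lia.
by move=> w Hw; apply: (next_req_min (T:=T) (t:=t)); lia.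
Qed.

Lemma next_req_beyond t q : t < T -> q \in cA t -> miss sigma cA t.+1 -> t.+1 < next t q.
Proof.
move=> tT q_in ni; rewrite ltn_neqAle next_req_gt ?(ltnW tT) // andbT.
apply: contraNneq ni => E; rewrite /miss /= E sigma_next_req -?E ?(ltnW tT) //.
Qed.

Lemma pairing_cons t Us b z x : pairing t Us b -> z \in cA t -> z \notin Us ->
  x \notin cA t -> next t z < next t x -> (forall t', t <= t' < next t x -> x \in cO t') ->
  x \notin map b Us -> pairing t (z :: Us) (fun q => if q == z then x else b q).
Proof.
move=> [Us_uniq Us_sub b_inj b_spec] z_in zU x_out lt x_kept xb.
have neq_z y : y \in Us -> (y == z) = false by move=> yU; apply: contraNF zU => /eqP <-.
split=> [|y|y1 y2|y].
- by rewrite /= zU.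
- by rewrite inE => /orP[/eqP -> | /Us_sub].
- rewrite !inE => /orP[/eqP -> | y1U] /orP[/eqP -> | y2U]; rewrite ?eqxx ?neq_z //.
  + by move=> E; move: xb; rewrite E map_f.
  + by move=> E; move: xb; rewrite -E map_f.
  + exact: b_inj.
by rewrite inE => /orP[/eqP -> | yU]; rewrite ?eqxx ?neq_z //; apply: b_spec.
Qed.

Lemma evicted_partner t Us b p r : t < T -> pairing t Us b -> ev t.+1 = Some (p, r) ->
  (p \in Us) || kept_until_next t p ->
  let x := if p \in Us then b p else p in
  [/\ x \notin cA t.+1, next t.+1 p <= next t.+1 x &
      forall t', t.+1 <= t' < next t.+1 x -> x \in cO t'].
Proof.
move=> tT [_ _ _ b_spec] Eev p_kept /=; have tT1 : 0 < t.+1 <= T by lia.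
have [_ ni _ _ _] := AO_evict tT1 Eev; have [p_in p_out] := AO_evicted_mem tT1 Eev.
have p_far := next_req_beyond tT p_in ni; have nsp := sigma_succ_neq tT p_far.
rewrite next_reqS //; case: ifPn p_kept => [pU _ | _ p_kept]; last first.
  by rewrite next_reqS //; split=> // t' Ht'; apply: kept_until_next_stay; lia.
have [b_out lt b_kept] := b_spec p pU.
have nsb : sigma t.+1 != b p by apply: (sigma_succ_neq tT); lia.
rewrite next_reqS //; split=> [||t' Ht']; [| lia | apply: b_kept; lia].
apply/negP => /(cache_sub AO_cache_run tT1).
by rewrite inE (negbTE b_out) orbF eq_sym (negbTE nsb).
Qed.

Lemma unkept_page_exists t Us b p : t < T -> pairing t Us b -> miss sigma cA t.+1 ->
  size (cA t) = k -> p \in cA t -> (p \in Us) || kept_until_next t p ->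
  exists2 z, z \in cA t & [&& z \notin Us, ~~ kept_until_next t z & z != p].
Proof.
move=> tT [Us_uniq _ b_inj b_spec] ni sz p_in p_kept; apply/hasP/negPn/negP => /hasPn none.
pose kept := [seq q <- cA t | kept_until_next t q].
have cover : {subset cA t <= kept ++ Us}.
  move=> q q_in; rewrite mem_cat mem_filter q_in andbT.
  case: (eqVneq q p) => [-> | ne]; first by rewrite orbC.
  by move: (none q q_in); rewrite ne andbT negb_and !negbK orbC.
have tT1 : 0 < t.+1 <= T by lia.
have b_far y : y \in Us -> t.+1 < next t (b y).
  by move=> /b_spec[_ lt _]; have := next_req_gt sigma y (ltnW tT); lia.
pose held := sigma t.+1 :: kept ++ map b Us.
have held_sub : {subset held <= cO t.+1}.
  move=> x; rewrite inE mem_cat => /or3P[/eqP -> | | /mapP [y yU ->]].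
  - exact: (cache_req O_run tT1).
  - rewrite mem_filter => /andP[kx x_in]; apply: (kept_until_next_stay (ltnW tT) kx).
    by rewrite leqnSn next_req_beyond.
  - by have [_ _ b_kept] := b_spec y yU; apply: b_kept; rewrite leqnSn b_far.
have held_uniq : uniq held.
  have ni' : sigma t.+1 \notin cA t by [].
  rewrite /= mem_cat negb_or cat_uniq filter_uniq ?(cache_uniq AO_cache_run) ?(ltnW tT) //.
  rewrite map_inj_in_uniq // Us_uniq andbT mem_filter negb_and ni' orbT /=; apply/andP; split.
    by apply/mapP => -[y yU E]; move: (sigma_succ_neq tT (b_far y yU)); rewrite E eqxx.
  apply/hasPn => x /mapP [y yU ->]; have [b_out _ _] := b_spec y yU.
  by rewrite /= mem_filter negb_and b_out orbT.
have := uniq_leq_size held_uniq held_sub; have := cache_size O_run (t:=t.+1) tT.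
have := uniq_leq_size (cache_uniq AO_cache_run (ltnW tT)) cover.
by rewrite /held /= !size_cat size_map sz; lia.
Qed.

Lemma charging_farthest t Us b cl : t < T -> pairing t Us b -> claimed t Us cl ->
  farthest_eviction t.+1 ->
  exists Us' b' cl', [/\ pairing t.+1 Us' b', claimed t.+1 Us' cl' & size cl' = (size cl).+1].
Proof.
move=> tT pair claim; rewrite /farthest_eviction.
case Eev: (ev t.+1) => [[p r] | //] /= /andP[pT p_max]; have tT1 : 0 < t.+1 <= T by lia.
have [_ ni sz _ ECA] := AO_evict tT1 Eev; have [p_in p_out] := AO_evicted_mem tT1 Eev.
have nsp := sigma_succ_neq tT (next_req_beyond tT p_in ni).
have pair' := pairing_prune tT pair; have claim' := claimed_prune tT claim.
case: (boolP ((p \in Us) || kept_until_next t p)) => [p_kept | ]; last first.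
  rewrite negb_or => /andP[pU nk].
  have [fresh nc Ep] := fresh_claim (ltnW tT) claim p_in pU pT nk.
  exists (prune t Us), b, (next t p :: cl); split=> //.
  by apply: claimed_cons; rewrite ?Ep ?next_reqS ?next_req_pos ?pT // ltnW.
have [z z_in /and3P[zU nkz zp]] := unkept_page_exists tT pair ni sz p_in p_kept.
have z_lt : next t z < next t p.
  rewrite ltn_neqAle (allP p_max z z_in) andbT; apply: contra zp => /eqP E.
  by rewrite (next_req_inj (ltnW tT) (ltnW tT) E) // (leq_trans (allP p_max z z_in)).
have zT : next t z <= T := ltnW (leq_trans z_lt pT).
have [fresh nc Ez] := fresh_claim (ltnW tT) claim z_in zU zT nkz.
have nsz : sigma t.+1 != z by apply: contraNneq ni => ->.
have [x_out x_le x_kept] := evicted_partner tT pair Eev p_kept.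
exists (z :: prune t Us), (fun q => if q == z then (if p \in Us then b p else p) else b q).
exists (next t z :: cl); split; last by [].
  apply: pairing_cons => //.
  - have A_uniq := cache_uniq AO_cache_run (ltnW tT).
    by rewrite ECA inE eq_sym (negbTE nsz) (mem_rem_uniq _ A_uniq) inE zp.
  - by rewrite mem_filter (negbTE zU) andbF.
  - by rewrite (next_reqS tT nsz) (leq_trans _ x_le) // (next_reqS tT nsp).
  apply/mapP => -[y]; rewrite mem_filter => /andP[/andP[_ y_in] yU].
  case: (pair) => _ _ b_inj b_spec; case: ifP => [pU /(b_inj _ _ pU yU) Eyp | _ Epy].
    by move: p_out; rewrite Eyp y_in.
  by have [b_out _ _] := b_spec y yU; rewrite -Epy p_in in b_out.
by apply: claimed_consU; rewrite ?Ez ?next_reqS ?next_req_pos ?zT ?(ltnW tT).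
Qed.

Lemma charging_invariant t : t <= T -> exists Us b cl,
  [/\ pairing t Us b, claimed t Us cl & size cl = count farthest_eviction (iota 1 t)].
Proof.
elim: t => [_ | t IH tT]; first by exists [::], id, [::].
have [Us [b [cl [pair claim size_cl]]]] := IH (ltnW tT).
rewrite count_iota1S; case: (boolP (farthest_eviction t.+1)) => [far | _].
  have [Us' [b' [cl' [pair' claim' size_cl']]]] := charging_farthest tT pair claim far.
  by exists Us', b', cl'; rewrite size_cl' size_cl addn1.
by exists (prune t Us), b, cl; rewrite addn0 -size_cl; split;
  [apply: pairing_prune | apply: claimed_prune |].
Qed.

Lemma count_farthest_eviction :
  count farthest_eviction (iota 1 T) <= count (noncompulsory sigma cO) (iota 1 T).
Proof.
have [Us [b [cl [_ [cl_uniq cl_miss _] <-]]]] := charging_invariant (leqnn T).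
rewrite -size_filter; apply: uniq_leq_size cl_uniq _ => u /cl_miss [uT nc].
by rewrite mem_filter nc mem_iota1.
Qed.

End Charging.

End AlternatingOracle.

Lemma belady_cache_run (P : eqType) (sigma : nat -> P) k T c :
  belady_run sigma k T c -> cache_run sigma k T c.
Proof.
case=> c0 step; split=> // t tT; have := step t tT => /=.
case: ifP => [I -> | ni]; first by left.
case: ifP => [sz -> | /negbT]; first by right; left.
by rewrite -leqNgt => sz [p [pin _ ->]]; right; right; split=> //; exists p.
Qed.

Theorem mainTheorem13 (P : eqType) (sigma : nat -> P) (omega : nat -> nat)
    (k T : nat) (cacheB : nat -> seq P) (ev : nat -> option (P * rule))
    (cacheOPT : nat -> seq P) :
  AO_run sigma omega k T cacheB ev ->
  belady_run sigma k T cacheOPT ->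
  misses sigma T cacheB <= 3 * misses sigma T cacheOPT + 3 * eta sigma omega T.
Proof.
move=> A_run /belady_cache_run O_run.
rewrite -(misses_split (AO_cache_run A_run)) -(misses_split O_run).
move: (count_noncompulsory_AO A_run) (count_evicted_returning_blind sigma T cacheB ev).
move: (count_farthest_eviction A_run O_run) (count_misguided_eviction A_run).
clear; lia.
Qed.
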